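(* Fix a ROMDP satisfying Assumptions 1 and 2 below, and a deterministic observation-based policy $\pi:\mathcal Y\to\mathcal A$. For every action $l\in\mathcal A$ and every hidden state $i\in\mathcal X_\pi^{(l)}$ let $\mathcal Y_i^{(l)}=\{j\in[Y]:[V_2^{(l)}]_{j,i}>0\}$ be the observations clustered together according to $V_2^{(l)}$, and let $\mathcal Y^{\mathsf c}=\mathcal Y\setminus\bigcup_{i,l}\mathcal Y_i^{(l)}$ be the observations not clustered. Let the auxiliary state space $\mathcal S$ consist of all the clusters $\mathcal Y_i^{(l)}$ ($l\in\mathcal A$, $i\in\mathcal X_\pi^{(l)}$) together with the singletons $\{j\}$, $j\in\mathcal Y^{\mathsf c}$. Then the total number of elements of $\mathcal S$ satisfies $S=|\mathcal S|\le AX$.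
   Context: A rich-observation MDP (ROMDP) consists of finite sets of hidden states $\mathcal X=[X]$, observations $\mathcal Y=[Y]$ and actions $\mathcal A=[A]$ with $X\le Y$; a transition tensor $T\in\mathbb R^{X\times X\times A}$, $T_{i',i,l}=\mathbb P(x'=i'\mid x=i,a=l)$; an observation matrix $O\in\mathbb R^{Y\times X}$, $O_{j,i}=\mathbb P(y=j\mid x=i)$, such that every observation $j$ has exactly one hidden state $x_j$ with $O_{j,x_j}>0$ (so the sets $\mathcal Y_i=\{j:O_{j,i}>0\}$ partition $\mathcal Y$); rewards in $[0,1]$ whose mean depends only on hidden state and action. The agent only observes $y_t$ and rewards. Assumption 1: for every deterministic policy $\pi:\mathcal Y\to\mathcal A$ the Markov chain induced on hidden states is ergodic. Assumption 2: for every action $l$ the matrix $T_{\cdot,\cdot,l}\in\mathbb R^{X\times X}$ is full rank. For a policy $\pi$, let $\omega_\pi^{(l)}(i)=\mathbb P_\pi(x=i\mid a=l)$ under the stationary distribution and $\mathcal X_\pi^{(l)}=\{i:\omega_\pi^{(l)}(i)>0\}$. Consider three consecutive steps $t-1,t,t+1$ of the stationary process under $\pi$, relabelled $1,2,3$, and let $\vec v_1,\vec v_2,\vec v_3\in\{0,1\}^Y$ be the one-hot encodings of $y_{t-1},y_t,y_{t+1}$; $x_2,a_2$ denote the hidden state and action at time $t$. The factor matrix $V_2^{(l)}\in\mathbb R^{Y\times|\mathcal X_\pi^{(l)}|}$ is $[V_2^{(l)}]_{j,i}=\mathbb P(\vec v_2=e_j\mid x_2=i,a_2=l)$ for $i\in\mathcal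 X_\pi^{(l)}$. *)

From HB Require Import structures.
From mathcomp Require Import all_boot all_order all_algebra.
Set Implicit Arguments. Unset Strict Implicit. Unset Printing Implicit Defensive.
Import Order.TTheory GRing.Theory Num.Theory.
Local Open Scope ring_scope.

Section ROMDP.
Variables (R : realFieldType) (X Y A : nat).

(* T l : 'M_X with (T l) i' i = P(x' = i' | x = i, a = l)  (column-stochastic).
   O : 'M_(Y,X) with O j i = P(y = j | x = i). *)

Definition hidden_chain (T : 'I_A -> 'M[R]_X) (O : 'M[R]_(Y, X))
    (pi : 'I_Y -> 'I_A) : 'M[R]_X :=
  \matrix_(i', i) \sum_(j < Y) O j i * T (pi j) i' i.

Definition ergodic (P : 'M[R]_X) : Prop :=
  exists n : nat, forall i' i, 0 < (P ^+ n) i' i.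

Definition stationary (P : 'M[R]_X) (rho : 'I_X -> R) : Prop :=
  [/\ forall i, 0 <= rho i, \sum_(i < X) rho i = 1 &
      forall i', \sum_(i < X) P i' i * rho i = rho i'].

Definition act_given_state (O : 'M[R]_(Y, X)) (pi : 'I_Y -> 'I_A)
    (l : 'I_A) (i : 'I_X) : R :=
  \sum_(j < Y | pi j == l) O j i.

Definition joint_xa (rho : 'I_X -> R) (O : 'M[R]_(Y, X)) (pi : 'I_Y -> 'I_A) (l : 'I_A) (i : 'I_X) : R :=
  rho i * act_given_state O pi l i.

(* omega_pi^(l)(i) = P(x = i | a = l)  (taken to be 0 if P(a = l) = 0) *)
Definition omega (rho : 'I_X -> R) (O : 'M[R]_(Y, X)) (pi : 'I_Y -> 'I_A) (l : 'I_A) (i : 'I_X) : R :=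
  joint_xa rho O pi l i / \sum_(k < X) joint_xa rho O pi l k.

Definition Xsupp (rho : 'I_X -> R) (O : 'M[R]_(Y, X)) (pi : 'I_Y -> 'I_A) (l : 'I_A) : {set 'I_X} :=
  [set i | 0 < omega rho O pi l i].

(* [V_2^(l)]_{j,i} = P(y_2 = j | x_2 = i, a_2 = l)  (meaningful for i in X_pi^(l)) *)
Definition V2 (rho : 'I_X -> R) (O : 'M[R]_(Y, X)) (pi : 'I_Y -> 'I_A) (l : 'I_A)
    (j : 'I_Y) (i : 'I_X) : R :=
  (rho i * O j i * (pi j == l)%:R) / joint_xa rho O pi l i.

Definition cluster (rho : 'I_X -> R) (O : 'M[R]_(Y, X)) (pi : 'I_Y -> 'I_A) (l : 'I_A) (i : 'I_X) : {set 'I_Y} := [set j | 0 < V2 rho O pi l j i].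

Definition unclustered (rho : 'I_X -> R) (O : 'M[R]_(Y, X)) (pi : 'I_Y -> 'I_A) : {set 'I_Y} :=
  ~: \bigcup_(l : 'I_A) \bigcup_(i in Xsupp rho O pi l) cluster rho O pi l i.

Definition aux_states (rho : 'I_X -> R) (O : 'M[R]_(Y, X)) (pi : 'I_Y -> 'I_A) : {set {set 'I_Y}} :=
  [set cluster rho O pi l i | l : 'I_A, i : 'I_X in Xsupp rho O pi l]
  :|: [set [set j] | j in unclustered rho O pi].

End ROMDP.

(* Under Assumption 1 the chain induced by pi is ergodic, so its stationary
   distribution charges every hidden state.  Hence for each observation j,
   with x_j its unique emitting state, x_j lies in X_pi^(pi j) and j lies in
   the cluster Y_(x_j)^(pi j): every observation is clustered.  So S only
   consists of clusters, which are indexed by pairs (l, i) in A x X. *)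

From HB Require Import structures.
From mathcomp Require Import all_boot all_order all_algebra.
Import Order.TTheory GRing.Theory Num.Theory.
Local Open Scope ring_scope.

Lemma psumr_gt0 {R : numDomainType} {I : finType} {P : pred I} {F : I -> R}
    (i0 : I) :
  (forall i, P i -> 0 <= F i) -> P i0 -> 0 < F i0 ->
  0 < \sum_(i | P i) F i.
Proof.
move=> F_ge0 Pi0 Fi0_gt0; rewrite lt0r sumr_ge0 // andbT psumr_neq0 //.
by apply/hasP; exists i0; rewrite ?mem_index_enum ?Pi0.
Qed.

Lemma card_imset2_le {aT bT rT : finType} (f : aT -> bT -> rT)
    (D1 : {pred aT}) (D2 : aT -> {pred bT}) :
  (#|[set f x y | x in D1, y in D2 x]| <= #|aT| * #|bT|)%N.
Proof.
rewrite -card_prod; apply: leq_trans (leq_imset_card (fun p => f p.1 p.2) _).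
apply/subset_leq_card/subsetP => _ /imset2P[x y _ _ ->].
by apply/imsetP; exists (x, y).
Qed.

Section StationaryDistribution.
Context {R : realFieldType} {X : nat} {P : 'M[R]_X} {rho : 'I_X -> R}.
Hypothesis rho_stationary : stationary P rho.

Lemma stationary_exp (k : nat) (i' : 'I_X) :
  \sum_i (P ^+ k) i' i * rho i = rho i'.
Proof.
have [_ _ P_rho] := rho_stationary.
elim: k i' => [|k IHk] i'.
  rewrite expr0 (bigD1 i') //= !mxE eqxx mul1r big1 ?addr0 // => i ne_i'i.
  by rewrite !mxE eq_sym (negbTE ne_i'i) mul0r.
under eq_bigr => i _ do rewrite exprSr -mulmxE mxE big_distrl /=.
rewrite exchange_big /= -IHk; apply: eq_bigr => m _.
by rewrite -P_rho big_distrr /=; apply: eq_bigr => i _; rewrite mulrA.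
Qed.

Lemma ergodic_stationary_gt0 : ergodic P -> forall i, 0 < rho i.
Proof.
have [rho_ge0 rho_sum1 _] := rho_stationary.
move=> [n Pn_gt0] i.
have [i0 rho_i0_gt0] : exists i0, 0 < rho i0.
  have : \sum_(i < X) rho i != 0 by rewrite rho_sum1 oner_neq0.
  by rewrite psumr_neq0 // => /hasP[i0 _ /= ?]; exists i0.
rewrite -(stationary_exp n i) (psumr_gt0 i0) ?mulr_gt0 // => j _.
by rewrite mulr_ge0 // ltW.
Qed.

End StationaryDistribution.

Section Clusters.
Context {R : realFieldType} {X Y A : nat}.
Context {O : 'M[R]_(Y, X)} {rho : 'I_X -> R}.
Variable pi : 'I_Y -> 'I_A.
Hypothesis O_ge0 : forall j i, 0 <= O j i.
Hypothesis rho_gt0 : forall i, 0 < rho i.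

Lemma joint_xa_ge0 (l : 'I_A) (i : 'I_X) : 0 <= joint_xa rho O pi l i.
Proof. by apply: mulr_ge0; [apply: ltW | apply: sumr_ge0]. Qed.

Lemma joint_xa_gt0 {j : 'I_Y} {i : 'I_X} :
  0 < O j i -> 0 < joint_xa rho O pi (pi j) i.
Proof. by move=> Oji_gt0; rewrite mulr_gt0 // (psumr_gt0 j). Qed.

Lemma emitted_in_cluster (j : 'I_Y) (i : 'I_X) :
  0 < O j i -> i \in Xsupp rho O pi (pi j) /\ j \in cluster rho O pi (pi j) i.
Proof.
move=> Oji_gt0; have joint_gt0 := joint_xa_gt0 Oji_gt0.
split; rewrite inE.
  by rewrite divr_gt0 // (psumr_gt0 i) // => k _; apply: joint_xa_ge0.
by rewrite /V2 eqxx mulr1 divr_gt0 // mulr_gt0.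
Qed.

Lemma unclustered_eq0 :
  (forall j, exists i, 0 < O j i) -> unclustered rho O pi = set0.
Proof.
move=> O_emits; apply/setP => j; rewrite !inE; apply/negbTE; rewrite negbK.
have [i /emitted_in_cluster[i_supp j_cluster]] := O_emits j.
by apply/bigcupP; exists (pi j) => //; apply/bigcupP; exists i.
Qed.

End Clusters.

Theorem lemma1 (R : realFieldType) (X Y A : nat)
    (T : 'I_A -> 'M[R]_X) (O : 'M[R]_(Y, X)) (r : 'I_X -> 'I_A -> R)
    (pi : 'I_Y -> 'I_A) (rho : 'I_X -> R) :
  (X <= Y)%N ->
  (forall l i' i, 0 <= T l i' i) ->
  (forall l i, \sum_(i' < X) T l i' i = 1) ->
  (forall j i, 0 <= O j i) ->
  (forall i, \sum_(j < Y) O j i = 1) ->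
  (forall j : 'I_Y, exists! i : 'I_X, 0 < O j i) ->
  (forall i l, 0 <= r i l <= 1) ->
  (* Assumption 1 *)
  (forall pi' : 'I_Y -> 'I_A, ergodic (hidden_chain T O pi')) ->
  (* Assumption 2 *)
  (forall l, \rank (T l) = X) ->
  (* rho: the stationary distribution of the hidden chain under pi *)
  stationary (hidden_chain T O pi) rho ->
  (#| aux_states rho O pi | <= A * X)%N.
Proof.
move=> _ _ _ O_ge0 _ O_unique_emitter _ ergodic_pi _ rho_stationary.
have rho_gt0 := ergodic_stationary_gt0 rho_stationary (ergodic_pi pi).
have O_emits : forall j, exists i, 0 < O j i.
  by move=> j; have [i [Oji_gt0 _]] := O_unique_emitter j; exists i.
rewrite /aux_states (unclustered_eq0 pi O_ge0 rho_gt0 O_emits) imset0 setU0.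
by apply: leq_trans (card_imset2_le _ _ _) _; rewrite !card_ord.
Qed.
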